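(* Let $H$ and $E$ be Hilbert spaces, let $T:H\to H$ be a bounded linear operator with $\ker T=\{0\}$, let $\gamma:E\to H$ be a bounded linear operator with $\ker\gamma=\{0\}$ and $\mathcal{R}(T)\cap\mathcal{R}(\gamma)=\{0\}$, and let $\Lambda$ be a linear operator in $E$ with domain $\mathcal{D}(\Lambda)\subset E$. Define on $\mathcal{D}(A)=\mathcal{R}(T)\dot+\mathcal{R}(\gamma)$ the maps $A(Tf+\gamma\varphi)=f$ and $\Gamma_0(Tf+\gamma\varphi)=\varphi$ ($f\in H,\varphi\in E$), and on $\mathcal{D}(\Gamma_1)=\mathcal{R}(T)\dot+\gamma\mathcal{D}(\Lambda)$ the map $\Gamma_1(Tf+\gamma\varphi)=\gamma^*f+\Lambda\varphi$ ($f\in H,\varphi\in\mathcal{D}(\Lambda)$). For $\lambda\in\mathbb{C}$ with $I-\lambda T$ boundedly invertible, let $M(\lambda)$ be the operator in $E$ defined by $M(\lambda)\Gamma_0u_\lambda=\Gamma_1u_\lambda$ for all $u_\lambda\in\ker(A-\lambda I)\cap\mathcal{D}(\Gamma_1)$. Then for every such $\lambda$, \[M(\lambda)=\Gamma_1(I-\lambda T)^{-1}\gamma=\Lambda+\lambda\gamma^*(I-\lambda T)^{-1}\gamma,\qquad \mathcal{D}(M(\lambda))=\mathcal{D}(\Lambda).\]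
   Context: $\mathcal{R}(\cdot)$ denotes range, $\dot+$ direct sum, $\gamma^*:H\to E$ the Hilbert-space adjoint of $\gamma$. $M(\lambda)$ is called the M-operator. *)

From HB Require Import structures.
From mathcomp Require Import all_boot all_order all_algebra.
From mathcomp Require Import complex.
From mathcomp Require Import all_classical all_reals all_analysis.
Set Implicit Arguments. Unset Strict Implicit. Unset Printing Implicit Defensive.
Import Order.TTheory GRing.Theory Num.Theory ComplexField.
Import numFieldNormedType.Exports.
Local Open Scope ring_scope.

(* Inner product on a complex normed space V whose norm is induced by it:
   linear in the first argument, conjugate symmetric, and <x,x> = |x|^2
   (which yields positivity and definiteness). *)
Record is_inner_product (R : realType) (V : normedModType R[i])
    (ip : V -> V -> R[i]) : Prop := {
  ip_linear : forall (a : R[i]) (x y z : V), ip (a *: x + y) z = a * ip x z + ip y z;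
  ip_conj_sym : forall x y : V, ip y x = (ip x y)^*;
  ip_norm : forall x : V, ip x x = `|x| ^+ 2
}.

Definition hilbert (R : realType) (V : completeNormedModType R[i])
  (ip : V -> V -> R[i]) : Prop := is_inner_product ip.

Definition bounded_op (R : realType) (U V : normedModType R[i]) (f : U -> V) : Prop :=
  exists k : R[i], forall x : U, `|f x| <= k * `|x|.

Definition is_adjoint (R : realType) (E H : normedModType R[i])
  (ipE : E -> E -> R[i]) (ipH : H -> H -> R[i]) (g : E -> H) (g' : H -> E) : Prop :=
  forall (e : E) (h : H), ipH (g e) h = ipE e (g' h).

Definition linear_op_in (R : realType) (E : normedModType R[i])
  (DL : E -> Prop) (Lam : E -> E) : Prop :=
  DL 0 /\
  (forall (a : R[i]) x y, DL x -> DL y -> DL (a *: x + y)) /\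
  (forall (a : R[i]) x y, DL x -> DL y -> Lam (a *: x + y) = a *: Lam x + Lam y).

Section Ops.
Variables (R : realType) (H E : normedModType R[i]).
Variables (T : H -> H) (g : E -> H) (g' : H -> E) (DL : E -> Prop) (Lam : E -> E).

Definition A_graph (u v : H) : Prop :=
  exists (f : H) (phi : E), u = T f + g phi /\ v = f.

Definition Gamma0_graph (u : H) (x : E) : Prop :=
  exists (f : H) (phi : E), u = T f + g phi /\ x = phi.

Definition Gamma1_graph (u : H) (y : E) : Prop :=
  exists (f : H) (phi : E), DL phi /\ u = T f + g phi /\ y = g' f + Lam phi.

Definition M_graph (lam : R[i]) (x y : E) : Prop :=
  exists u : H, A_graph u (lam *: u) /\ Gamma0_graph u x /\ Gamma1_graph u y.
End Ops.

(* Since T and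
   gamma are injective with R(T) and R(gamma) meeting only in 0, every u in
   D(A) = R(T) + R(gamma) decomposes uniquely as T f + gamma phi.  For
   S = (I - lam T)^-1 the gamma-field vector S (gamma x) equals
   T (lam S (gamma x)) + gamma x, and it is the only u with A u = lam u and
   Gamma0 u = x; hence M(lam) x = Gamma1 S (gamma x), and reading Gamma1 off
   that decomposition gives Lam x + gamma^* (lam S (gamma x)).  The scalar
   lam passes through gamma^* unconjugated because gamma^* is an adjoint. *)
From HB Require Import structures.
From mathcomp Require Import all_boot all_order all_algebra.
From mathcomp Require Import complex.
From mathcomp Require Import all_classical all_reals all_analysis.
Import Order.TTheory GRing.Theory Num.Theory ComplexField.
Import numFieldNormedType.Exports.
Set Implicit Arguments.
Unset Strict Implicit.
Unset Printing Implicit Defensive.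
Local Open Scope ring_scope.

Section InnerProduct.
Variables (R : realType) (V : normedModType R[i]) (ip : V -> V -> R[i]).
Hypothesis ipV : is_inner_product ip.

Lemma ip_linear_r (a : R[i]) (x y z : V) :
  ip x (a *: y + z) = a^* * ip x y + ip x z.
Proof.
have [lin cs _] := ipV.
by rewrite cs lin rmorphD rmorphM [ip x y]cs [ip x z]cs.
Qed.

Lemma ip_0r (x : V) : ip x 0 = 0.
Proof.
have := ip_linear_r 1 x 0 0; rewrite scale1r addr0 rmorph1 mul1r => ip_0r_twice.
by apply: (addrI (ip x 0)); rewrite addr0 -ip_0r_twice.
Qed.

Lemma ip_injr (y z : V) : (forall x, ip x y = ip x z) -> y = z.
Proof.
move=> eq_ip; apply/eqP; rewrite -subr_eq0.
have [_ _ nrm] := ipV.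
have : ip (y - z) (y - z) = 0.
  by rewrite {2}addrC -scaleN1r ip_linear_r eq_ip -ip_linear_r scaleN1r addNr ip_0r.
by rewrite nrm => /eqP; rewrite sqrf_eq0 normr_eq0.
Qed.

End InnerProduct.

Lemma adjoint_scale (R : realType) (E H : normedModType R[i])
    (ipE : E -> E -> R[i]) (ipH : H -> H -> R[i]) (g : E -> H) (g' : H -> E) :
  is_inner_product ipE -> is_inner_product ipH -> is_adjoint ipE ipH g g' ->
  forall (a : R[i]) (h : H), g' (a *: h) = a *: g' h.
Proof.
move=> ipE_ok ipH_ok adj a h; apply: (ip_injr ipE_ok) => e.
rewrite -adj -[a *: h]addr0 -[a *: g' h]addr0.
by rewrite (ip_linear_r ipH_ok) (ip_linear_r ipE_ok) (ip_0r ipH_ok) (ip_0r ipE_ok) adj.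
Qed.

Section BoundaryTriple.
Variables (R : realType) (H E : normedModType R[i]).
Variables (T : {linear H -> H}) (g : {linear E -> H}) (g' : H -> E).
Variables (DL : E -> Prop) (Lam : E -> E).
Hypotheses (T_inj : forall f, T f = 0 -> f = 0) (g_inj : forall phi, g phi = 0 -> phi = 0).
Hypothesis ranges_disjoint : forall f phi, T f = g phi -> g phi = 0.

Lemma decomposition_unique f1 f2 phi1 phi2 :
  T f1 + g phi1 = T f2 + g phi2 -> f1 = f2 /\ phi1 = phi2.
Proof.
move=> eq_u.
have eq_diff : T (f1 - f2) = g (phi2 - phi1).
  by rewrite !linearB -[T f1](addrK (g phi1)) eq_u (addrC (T f2)) addrAC addrK.
have g0 := ranges_disjoint eq_diff; rewrite g0 in eq_diff.
split; first exact/subr0_eq/T_inj.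
exact/esym/subr0_eq/g_inj.
Qed.

Variables (lam : R[i]) (S : {linear H -> H}).
Hypotheses (S_left : forall h, S (h - lam *: T h) = h)
           (S_right : forall h, S h - lam *: T (S h) = h).

Lemma gamma_field_decomposition x : S (g x) = T (lam *: S (g x)) + g x.
Proof. by apply/eqP; rewrite linearZ addrC -subr_eq S_right. Qed.

Lemma gamma_fieldP (u : H) (x : E) :
  A_graph T g u (lam *: u) /\ Gamma0_graph T g u x <-> u = S (g x).
Proof.
split.
- case=> -[f [phi [def_u def_f]]] [f0 [phi0 [def_u0 ->]]].
  have [_ <-] := decomposition_unique (etrans (esym def_u) def_u0).
  have resolvent_eq : u - lam *: T u = g phi.
    by rewrite {1}def_u -linearZ def_f (addrC (T f)) addrK.
  by rewrite -resolvent_eq S_left.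
- move=> ->; have def_u := gamma_field_decomposition x.
  by split; exists (lam *: S (g x)), x.
Qed.

Lemma M_graph_Gamma1 x y :
  M_graph T g g' DL Lam lam x y <-> Gamma1_graph T g g' DL Lam (S (g x)) y.
Proof.
split.
- by case=> u [hA [hG0 hG1]]; rewrite -(proj1 (gamma_fieldP u x)).
- move=> hG1; exists (S (g x)).
  by have [hA hG0] := proj2 (gamma_fieldP (S (g x)) x) erefl.
Qed.

Lemma Gamma1_gamma_field x y :
  (forall (a : R[i]) h, g' (a *: h) = a *: g' h) ->
  Gamma1_graph T g g' DL Lam (S (g x)) y <-> DL x /\ y = Lam x + lam *: g' (S (g x)).
Proof.
move=> g'Z; split.
- case=> f [phi [DLphi [def_u ->]]].
  rewrite gamma_field_decomposition in def_u.
  have [def_f def_phi] := decomposition_unique def_u.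
  by rewrite -def_f g'Z addrC def_phi.
- case=> DLx ->; exists (lam *: S (g x)), x.
  split=> //; split; first exact: gamma_field_decomposition.
  by rewrite g'Z addrC.
Qed.

End BoundaryTriple.

Theorem theorem2 (R : realType) (H E : completeNormedModType R[i])
  (ipH : H -> H -> R[i]) (ipE : E -> E -> R[i])
  (T : {linear H -> H}) (g : {linear E -> H}) (g' : H -> E)
  (DL : E -> Prop) (Lam : E -> E) :
  hilbert ipH -> hilbert ipE ->
  bounded_op T -> (forall f : H, T f = 0 -> f = 0) ->
  bounded_op g -> (forall phi : E, g phi = 0 -> phi = 0) ->
  (forall (f : H) (phi : E), T f = g phi -> g phi = 0) ->
  is_adjoint ipE ipH g g' ->
  linear_op_in DL Lam ->
  forall (lam : R[i]) (S : {linear H -> H}),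
    bounded_op S ->
    (forall h : H, S (h - lam *: T h) = h) ->
    (forall h : H, S h - lam *: T (S h) = h) ->
    (forall x y : E, M_graph T g g' DL Lam lam x y <-> Gamma1_graph T g g' DL Lam (S (g x)) y) /\
    (forall x y : E, M_graph T g g' DL Lam lam x y <->
        DL x /\ y = Lam x + lam *: g' (S (g x))).
Proof.
move=> ipH_ok ipE_ok _ T_inj _ g_inj ranges_disjoint adj _ lam S _ S_left S_right.
have g'Z := adjoint_scale ipE_ok ipH_ok adj.
have M_Gamma1 := M_graph_Gamma1 g' DL Lam T_inj g_inj ranges_disjoint S_left S_right.
split=> // x y; rewrite M_Gamma1; exact: Gamma1_gamma_field.
Qed.
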